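(* Let $A=(a_{ij})$ be a real $n\times n$ matrix with nonnegative entries, $\mathbf 1=(1,\ldots,1)^{\mathrm T}$, and $L=\operatorname{diag}(A\mathbf 1)-A$, and assume that $0$ is an eigenvalue of $L$ of algebraic multiplicity at least $2$. Let $S$ be the orthogonal projection of $\mathbb R^n$ onto $\mathcal R(L)\oplus\operatorname{span}(\mathbf 1)$ and, for $\tau>0$, let $\widetilde L(\tau)=\tau^{-1}(I-S)+LS$. Then $\|\widetilde L(\tau)-L\|_E$ decreases as $\tau>0$ increases, and its infimum over $\tau>0$ is $\|LS-L\|_E$. Moreover, over the range $0<\tau\le\bigl(\max_i\sum_{j\neq i}a_{ij}\bigr)^{-1}$, the smallest value of $\|\widetilde L(\tau)-L\|_E$ is attained at $\tau=\bigl(\max_i\sum_{j\neq i}a_{ij}\bigr)^{-1}$.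
   Context: $\|X\|_E$ denotes the Euclidean (Frobenius) norm $\sqrt{\operatorname{trace}(XX^{\mathrm T})}$. $\mathcal R(L)$ is the range of $L$. The condition $0<\tau\le(\max_i\sum_{j\ne i}a_{ij})^{-1}$ is the condition for $I-\tau L$ to be row stochastic. *)

From HB Require Import structures.
From mathcomp Require Import all_boot all_order all_algebra.
From mathcomp Require Import classical_sets reals.
Set Implicit Arguments. Unset Strict Implicit. Unset Printing Implicit Defensive.
Import Order.TTheory GRing.Theory Num.Theory.
Local Open Scope ring_scope.

Definition frob_norm {R : realType} {m n : nat} (X : 'M[R]_(m, n)) : R :=
  Num.sqrt (\tr (X *m X^T)).

Definition laplacian {R : realType} {n : nat} (A : 'M[R]_n) : 'M[R]_n :=
  diag_mx (A *m const_mx 1)^T - A.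

(* Subspace R(L) + span(1), represented (MathComp row-space convention) by the
   row space of the matrix whose rows span it: the columns of L (rows of L^T)
   together with the all-ones vector. *)
Definition range_plus_ones {R : realType} {n : nat} (L : 'M[R]_n) : 'M[R]_(n + 1, n) :=
  col_mx L^T (const_mx 1).

(* S is the orthogonal projection of R^n onto the subspace spanned by the rows of U:
   symmetric, idempotent, with range (= row space, S being symmetric) equal to U. *)
Definition is_orth_proj {R : realType} {n m : nat} (S : 'M[R]_n) (U : 'M[R]_(m, n)) : Prop :=
  S^T = S /\ S *m S = S /\ (S == U)%MS.

Definition Ltilde {R : realType} {n : nat} (L S : 'M[R]_n) (tau : R) : 'M[R]_n :=
  tau^-1 *: (1%:M - S) + L *m S.

Definition max_offdiag_rowsum {R : realType} {n : nat} (A : 'M[R]_n) : R :=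
  \big[Num.max/0]_(i < n) \sum_(j < n | j != i) A i j.

(** Since [L 1 = 0], the rank-one update [L + 1 1^T] has characteristic polynomial
    [('X - n) char_poly L / 'X]; a double root of [char_poly L] at [0] therefore makes
    [L + 1 1^T] singular. A nonzero left null vector of it kills both [L] and [1], so
    [R(L) + span(1)] is a proper subspace and [P := I - S] is a nonzero symmetric
    projection with [P L = 0]. Hence [Ltilde(tau) - L = tau^-1 P - L P] splits into two
    Frobenius-orthogonal pieces and [||Ltilde(tau) - L||_E^2 = tau^-2 ||P||_E^2 + ||L S - L||_E^2]
    with [||P||_E > 0], which is strictly decreasing in [tau] with infimum [||L S - L||_E]. *)
From HB Require Import structures.
From mathcomp Require Import all_boot all_order all_algebra.
From mathcomp Require Import boolp classical_sets reals.
From mathcomp Require Import lra.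

Set Implicit Arguments.
Unset Strict Implicit.
Unset Printing Implicit Defensive.
Import Order.TTheory GRing.Theory Num.Theory.
Local Open Scope ring_scope.
Local Open Scope classical_set_scope.

Section RankOneOnesUpdate.
Variables (R : comNzRingType) (n : nat) (L : 'M[R]_n).
Hypothesis L1 : L *m (const_mx 1 : 'cV_n) = 0.

(* [M := block_mx 1 1^T 1 ('X - L)] has determinant [char_poly (L + 1 1^T)] (Schur
   complement of its corner), and [M *m block_mx 'X 0 (-1) 1] is block upper
   triangular with diagonal blocks ['X - n] and ['X - L]. *)
Lemma char_poly_add_const1 :
  'X * char_poly (L + const_mx 1) = ('X - n%:R%:P) * char_poly L.
Proof.
pose E := char_poly_mx L.
pose u : 'cV[{poly R}]_n := const_mx 1.
pose v : 'rV[{poly R}]_n := const_mx 1.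
have Eu : E *m u = 'X *: u.
  rewrite /E /char_poly_mx mulmxBl mul_scalar_mx.
  have -> : map_mx polyC L *m u = map_mx polyC (L *m const_mx 1).
    by rewrite map_mxM; congr (_ *m _); apply/matrixP => i j; rewrite !mxE.
  by rewrite L1 map_mx0 subr0.
have uv : u *m v = const_mx 1.
  by apply/matrixP => i j; rewrite !mxE big_ord1 !mxE mulr1.
have vu : v *m u = (n%:R)%:M.
  apply/matrixP => i j; rewrite !ord1 !mxE /= mulr1n.
  under eq_bigr do rewrite !mxE mulr1.
  by rewrite sumr_const card_ord.
have EK : E - u *m v = char_poly_mx (L + const_mx 1).
  rewrite uv /E /char_poly_mx map_mxD opprD addrA; congr (_ - _).
  by apply/matrixP => i j; rewrite !mxE.
pose M := block_mx (1%:M : 'M_1) v u E.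
have detM : \det M = char_poly (L + const_mx 1).
  have -> : M = block_mx 1%:M 0 u 1%:M *m block_mx 1%:M v 0 (E - u *m v).
    by rewrite mulmx_block !mul1mx !mulmx1 !mul0mx !addr0 addrC subrK.
  by rewrite det_mulmx det_lblock det_ublock !det1 !mul1r EK.
pose N := block_mx ('X%:M : 'M_1) 0 (- u) 1%:M.
have detN : \det N = 'X by rewrite det_lblock det1 mulr1 det_scalar1.
have MN : M *m N = block_mx ('X%:M - v *m u) v 0 E.
  rewrite mulmx_block !mul1mx !mulmx1 !mulmx0 ?add0r ?addr0 !mulmxN.
  by rewrite mul_mx_scalar Eu subrr.
have := congr1 determinant MN.
rewrite det_mulmx detM detN det_ublock vu det_mx11 !mxE eqxx /= mulr1n.
by rewrite mulrC => ->; rewrite -mulNrn -polyCMn mulrC.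
Qed.

End RankOneOnesUpdate.

(* The coefficient of ['X] in [char_poly_add_const1] is [+-\det (L + 1 1^T)] on the
   left and [p_0 - n p_1] on the right, where [p_0 = p_1 = 0] as ['X^2] divides [p]. *)
Lemma det_add_const1_eq0 (R : fieldType) (n : nat) (L : 'M[R]_n) :
  L *m (const_mx 1 : 'cV_n) = 0 -> (1 < mup 0 (char_poly L))%N -> \det (L + const_mx 1) = 0.
Proof.
move=> L1 mupL.
have p0 : char_poly L != 0 by apply/monic_neq0/char_poly_monic.
move: mupL; rewrite mup_geq // subr0 => /dvdpP [q Hq].
have c0 : (char_poly L)`_0 = 0 by rewrite Hq coefMXn.
have c1 : (char_poly L)`_1 = 0 by rewrite Hq coefMXn.
have := congr1 (fun p : {poly R} => p`_1) (char_poly_add_const1 L1).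
rewrite /= coefXM /= mulrBl coefB coefXM /= coefCM c0 c1 mulr0 subr0.
by rewrite char_poly_det => /eqP; rewrite mulf_eq0 signr_eq0 => /eqP.
Qed.

Lemma left_kernel_add_const1 (R : numFieldType) (n : nat) (L : 'M[R]_n) (v : 'rV_n) :
  L *m (const_mx 1 : 'cV_n) = 0 -> v *m (L + const_mx 1) = 0 ->
  v *m L = 0 /\ v *m (const_mx 1 : 'cV_n) = 0.
Proof.
move=> L1 vK; pose c : 'cV[R]_n := const_mx 1; pose r : 'rV[R]_n := const_mx 1.
have J : (const_mx 1 : 'M[R]_n) = c *m r.
  by apply/matrixP => i j; rewrite !mxE big_ord1 !mxE mulr1.
have rc : r *m c = (n%:R)%:M.
  apply/matrixP => i j; rewrite !ord1 !mxE /= mulr1n.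
  under eq_bigr do rewrite !mxE mulr1.
  by rewrite sumr_const card_ord.
have vLs : v *m L + (v *m c) *m r = 0 by rewrite -mulmxA -J -mulmxDr.
have vc : v *m c = 0.
  have := congr1 (mulmx^~ c) vLs.
  rewrite /= mulmxDl -mulmxA L1 mulmx0 add0r mul0mx -mulmxA rc mul_mx_scalar.
  move=> /eqP; rewrite scaler_eq0 pnatr_eq0 => /orP[/eqP n0 | /eqP //].
  by apply/matrixP => i j; rewrite !mxE big1 // => k; have := ltn_ord k; rewrite {2}n0.
by split=> //; move: vLs; rewrite vc mul0mx addr0.
Qed.

Lemma range_plus_ones_not_full (R : realType) (n : nat) (L : 'M[R]_n) :
  L *m (const_mx 1 : 'cV_n) = 0 -> \det (L + const_mx 1) = 0 ->
  ~~ (1%:M <= range_plus_ones L)%MS.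
Proof.
move=> L1 /eqP/det0P [v v_neq0 vK]; apply/negP => /submxP [D HD].
have [vL vc] := left_kernel_add_const1 L1 vK.
have Uv : range_plus_ones L *m v^T = 0.
  rewrite /range_plus_ones mul_col_mx -trmx_mul vL trmx0.
  have -> : (const_mx 1 : 'rV[R]_n) *m v^T = (v *m const_mx 1)^T.
    by rewrite trmx_mul; congr (_ *m _); apply/matrixP => i j; rewrite !mxE.
  rewrite vc trmx0; apply/matrixP => i j.
  by rewrite !mxE; case: split => ?; rewrite mxE.
have : v^T = 0 by rewrite -[v^T]mul1mx HD -mulmxA Uv mulmx0.
by move/(congr1 trmx); rewrite trmxK trmx0; apply/eqP.
Qed.

Lemma orth_proj_compl_mulmx (F : fieldType) (n m : nat) (S : 'M[F]_n) (M : 'M[F]_(n, m)) :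
  S^T = S -> S *m S = S -> (M^T <= S)%MS -> (1%:M - S) *m M = 0.
Proof.
move=> ST SS /submxP [D HD].
have -> : M = S *m D^T by rewrite -[M]trmxK HD trmx_mul ST.
by rewrite mulmxA mulmxBl mul1mx SS subrr mul0mx.
Qed.

Lemma mxtrace_mulmxT_scaleD (R : comNzRingType) (n : nat) (P Y : 'M[R]_n) a :
  \tr (P *m Y^T) = 0 ->
  \tr ((a *: P + Y) *m (a *: P + Y)^T) = a ^+ 2 * \tr (P *m P^T) + \tr (Y *m Y^T).
Proof.
move=> PY; have YP : \tr (Y *m P^T) = 0 by rewrite -mxtrace_tr trmx_mul trmxK.
rewrite linearD linearZ /= mulmxDl !mulmxDr -!scalemxAl -!scalemxAr.
by rewrite !mxtraceD !mxtraceZ PY YP !mulr0 addr0 add0r expr2 mulrA.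
Qed.

Section TraceGram.

Variables (R : realDomainType) (m n : nat).

Lemma mxtrace_mulmxT_sum (X : 'M[R]_(m, n)) :
  \tr (X *m X^T) = \sum_i \sum_j X i j ^+ 2.
Proof.
apply: eq_bigr => i _; rewrite mxE; apply: eq_bigr => j _.
by rewrite mxE expr2.
Qed.

Lemma mxtrace_mulmxT_ge0 (X : 'M[R]_(m, n)) : 0 <= \tr (X *m X^T).
Proof.
by rewrite mxtrace_mulmxT_sum sumr_ge0 // => i _; rewrite sumr_ge0 // => j _; apply: sqr_ge0.
Qed.

Lemma mxtrace_mulmxT_gt0 (X : 'M[R]_(m, n)) : X != 0 -> 0 < \tr (X *m X^T).
Proof.
move=> X_neq0; rewrite lt_def mxtrace_mulmxT_ge0 andbT mxtrace_mulmxT_sum.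
apply: contra X_neq0 => /eqP.
have rows_ge0 i : true -> 0 <= \sum_j X i j ^+ 2.
  by move=> _; rewrite sumr_ge0 // => j _; apply: sqr_ge0.
move/(psumr_eq0P rows_ge0) => rows0; apply/eqP/matrixP => i j; rewrite mxE.
move: (rows0 i isT) => /(psumr_eq0P (fun k _ => sqr_ge0 (X i k))) /(_ j isT).
by move/eqP; rewrite sqrf_eq0 => /eqP.
Qed.

End TraceGram.

(* With [P := I - S], [Ltilde L S tau - L = tau^-1 P - L P], and [tr (P (L P)^T) =
   tr (P L^T)] vanishes because [P L = 0]. *)
Lemma frob_norm_Ltilde_subE (R : realType) (n : nat) (L S : 'M[R]_n) tau :
  S^T = S -> S *m S = S -> (1%:M - S) *m L = 0 ->
  frob_norm (Ltilde L S tau - L) =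
  Num.sqrt (tau^-1 ^+ 2 * \tr ((1%:M - S) *m (1%:M - S)^T)
            + \tr ((L *m S - L) *m (L *m S - L)^T)).
Proof.
move=> ST SS PL; rewrite /frob_norm /Ltilde -addrA mxtrace_mulmxT_scaleD //.
set P := 1%:M - S.
have PT : P^T = P by rewrite linearB /= trmx1 ST.
have PP : P *m P = P by rewrite mulmxBl mul1mx mulmxBr mulmx1 SS subrr subr0.
have -> : L *m S - L = - (L *m P) by rewrite mulmxBr mulmx1 opprB.
rewrite linearN /= mulmxN raddfN trmx_mul PT mulmxA PP.
change (- \tr (P *m L^T) = 0).
by rewrite -mxtrace_tr trmx_mul trmxK PT mxtrace_mulC PL linear0 oppr0.
Qed.

Section InverseSquareDecay.
Variables (R : realType) (a b : R).
Hypothesis b_ge0 : 0 <= b.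

Lemma sqrt_inv_sqr_decreasing : 0 < a -> forall t1 t2, 0 < t1 -> t1 < t2 ->
  Num.sqrt (t2^-1 ^+ 2 * a + b) < Num.sqrt (t1^-1 ^+ 2 * a + b).
Proof.
move=> a_gt0 t1 t2 t1_gt0 t12; have t2_gt0 := lt_trans t1_gt0 t12.
rewrite ltr_sqrt; last by rewrite ltr_wpDr // mulr_gt0 // exprn_gt0 // invr_gt0.
rewrite ltrD2r ltr_pM2r // ltrXn2r // ?invr_ge0 ?ltW //.
by rewrite ltf_pV2.
Qed.

Lemma inf_sqrt_inv_sqr : 0 <= a ->
  inf [set Num.sqrt (t^-1 ^+ 2 * a + b) | t in [set t : R | 0 < t]] = Num.sqrt b.
Proof.
move=> a_ge0; set E := [set _ | t in _].
have sqrt_b_lb : lbound E (Num.sqrt b).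
  move=> _ [t t_gt0 <-]; have ta_ge0 : 0 <= t^-1 ^+ 2 * a by rewrite mulr_ge0 ?sqr_ge0.
  by rewrite ler_sqrt ?lerDr // addr_ge0.
apply/eqP; rewrite eq_le lb_le_inf ?andbT //; last first.
  by exists (Num.sqrt (1^-1 ^+ 2 * a + b)), 1 => //=; rewrite ltr01.
apply/ler_addgt0Pr => e e_gt0.
(* Take [tau^-1 = c] with [c * sqrt a <= e]: then [c^2 a <= e^2 <= 2 e sqrt b + e^2]. *)
pose c := e / (Num.sqrt a + 1).
have sa_ge0 := sqrtr_ge0 a; have sb_ge0 := sqrtr_ge0 b.
have c_gt0 : 0 < c by rewrite divr_gt0 // ltr_wpDl.
have ca_le : c * Num.sqrt a <= e.
  by rewrite /c mulrAC ler_pdivrMr ?ltr_wpDl // ler_pM2l // lerDl.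
have Ec : E (Num.sqrt (c^-1^-1 ^+ 2 * a + b)) by exists c^-1 => //=; rewrite invr_gt0.
apply: le_trans (ge_inf (ex_intro _ _ sqrt_b_lb) Ec) _.
have -> : Num.sqrt b + e = Num.sqrt ((Num.sqrt b + e) ^+ 2).
  by rewrite sqrtr_sqr ger0_norm // addr_ge0 // ltW.
rewrite invrK ler_sqrt ?sqr_ge0 // -(sqr_sqrtr a_ge0) -exprMn -{1}(sqr_sqrtr b_ge0).
have ca_ge0 : 0 <= c * Num.sqrt a by rewrite mulr_ge0 // ltW.
move: ca_le ca_ge0; set x := c * Num.sqrt a; set y := Num.sqrt b => x_le_e x_ge0.
have x2_le : x ^+ 2 <= e ^+ 2 by rewrite ler_sqr ?nnegrE ?(ltW e_gt0).
have ye_ge0 : 0 <= y * e by rewrite mulr_ge0 // ltW.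
rewrite sqrrD; lra.
Qed.

End InverseSquareDecay.

Lemma laplacian_mul_ones (R : realType) (n : nat) (A : 'M[R]_n) :
  laplacian A *m (const_mx 1 : 'cV_n) = 0.
Proof.
rewrite /laplacian mulmxBl mul_diag_mx; apply/matrixP => i j.
by rewrite !mxE mulr1 ord1 subrr.
Qed.

Theorem proposition2 (R : realType) (n : nat) (A S : 'M[R]_n) :
  (forall i j, 0 <= A i j) ->
  (1 < mup 0 (char_poly (laplacian A)))%N ->
  is_orth_proj S (range_plus_ones (laplacian A)) ->
  let L := laplacian A in
  let f := fun tau : R => frob_norm (Ltilde L S tau - L) in
  (forall t1 t2 : R, 0 < t1 -> t1 < t2 -> f t2 < f t1) /\
  inf [set f tau | tau in [set t : R | 0 < t]] = frob_norm (L *m S - L) /\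
  (0 < max_offdiag_rowsum A ->
     forall tau : R, 0 < tau -> tau <= (max_offdiag_rowsum A)^-1 ->
       f ((max_offdiag_rowsum A)^-1) <= f tau).
Proof.
move=> _ mupL [ST [SS /andP [S_sub sub_S]]] L f.
have L1 := laplacian_mul_ones A.
have S_neq1 : S != 1%:M.
  apply: contraNneq (range_plus_ones_not_full L1 (det_add_const1_eq0 L1 mupL)).
  by move=> S1; rewrite -S1.
have PL : (1%:M - S) *m L = 0.
  by apply: orth_proj_compl_mulmx ST SS _; move: sub_S; rewrite col_mx_sub => /andP[].
have a_gt0 : 0 < \tr ((1%:M - S) *m (1%:M - S)^T).
  by rewrite mxtrace_mulmxT_gt0 // subr_eq0 eq_sym.
have b_ge0 := mxtrace_mulmxT_ge0 (L *m S - L).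
have -> : f = fun tau => Num.sqrt (tau^-1 ^+ 2 * \tr ((1%:M - S) *m (1%:M - S)^T)
                                    + \tr ((L *m S - L) *m (L *m S - L)^T)).
  by apply: funext => tau; rewrite /f frob_norm_Ltilde_subE.
have decr := sqrt_inv_sqr_decreasing b_ge0 a_gt0.
split; first exact: decr.
split; first exact: inf_sqrt_inv_sqr b_ge0 (ltW a_gt0).
move=> _ tau tau_gt0; rewrite le_eqVlt => /orP [/eqP -> // | lt_tau].
exact/ltW/decr.
Qed.
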